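(* Let $G=(V,E)$ be a connected graph with root $r\in V$, vertex probabilities $p_v\in[0,1]$ with $p_r=0$ and $\sum_{v\in V}p_v=1$, and edge lengths $\lambda_e>0$, and let $n=|V\setminus\{r\}|$. Let $\varepsilon>0$ and let $T^{\mathrm{s}}$ be the tree returned by the parametric search (described in the context) run with parameter $\varepsilon$. Then $$\rho^\star\le (1+\varepsilon)\Bigl(2-\tfrac1n\Bigr)\,\rho(T^{\mathrm{s}}),$$ where $\rho^\star=\max_{T\in\mathcal T(G)}\rho(T)$ is the maximum density.
   Context: Notation: for $V'\subseteq V$, $p(V')=\sum_{v\in V'}p_v$; for $E'\subseteq E$, $\lambda(E')=\sum_{e\in E'}\lambda_e$. $\mathcal T(G)$ is the set of subtrees of $G$ containing the root $r$; for $T\in\mathcal T(G)$, $p(T)=p(V[T])$ and $\lambda(T)=\lambda(E[T])$, and for $\lambda(T)>0$ the (search) density is $\rho(T)=p(T)/\lambda(T)$. The maximum density subtree problem asks for $T\in\mathcal T(G)$ maximizing $\rho(T)$. Prize-collecting Steiner tree (PCST) problem: given $G$, root $r$, edge lengths $(\ell_e)$ and vertex penalties $(p_v)$, find $T\in\mathcal T(G)$ minimizing $\ell(T)+p(V\setminus V[T])$. The GW algorithm is the Goemans–Williamson primal-dual algorithm for PCST; it returns a tree $T\in\mathcal T(G)$ satisfying $\ell(T)+(2-\frac1n)p(V\setminus V[T])\le(2-\frac1n)(\ell(T')+p(V\setminus V[T']))$ for every $T'\in\mathcal T(G)$. Parametric search with parameter $\varepsilon>0$: (1) take an arbitrary $T^{\mathrm{s}}\in\mathcal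 T(G)$ (with $\lambda(T^{\mathrm s})>0$), set $\alpha\gets(2-\frac1n)p(T^{\mathrm{s}})/\lambda(T^{\mathrm{s}})$ and $\beta\gets\max\{p_v/\lambda_{\{v,w\}}:\{v,w\}\in E\}$; (2) while $\beta>(1+\varepsilon)\alpha$: set $\rho\gets(\alpha+\beta)/2$; let $T$ be the tree returned by the GW algorithm on $G$ with edge lengths $(\rho\lambda_e)_{e\in E}$ and penalties $(p_v)_{v\in V}$; if $(2-\frac1n)p(T)\le\rho\lambda(T)$ set $\beta\gets\rho$, otherwise set $\alpha\gets(2-\frac1n)\rho(T)$ and $T^{\mathrm{s}}\gets T$; (3) return $T^{\mathrm{s}}$. *)

From mathcomp Require Import all_boot all_order all_algebra.
Set Implicit Arguments. Unset Strict Implicit. Unset Printing Implicit Defensive.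
Import Order.TTheory GRing.Theory Num.Theory.
Local Open Scope ring_scope.

Section Graph.
Variables (R : realFieldType) (V : finType).

Definition edge_rel (F : {set {set V}}) : rel V := fun x y => [set x; y] \in F.

Definition is_graph (E : {set {set V}}) : Prop :=
  forall e, e \in E -> #|e| = 2%N.

Definition connected_graph (E : {set {set V}}) : Prop :=
  forall u v : V, connect (edge_rel E) u v.

Definition is_rooted_subtree (E : {set {set V}}) (r : V)
    (S : {set V}) (F : {set {set V}}) : Prop :=
  [/\ F \subset E, r \in S,
      (forall e, e \in F -> e \subset S),
      (forall v, v \in S -> connect (edge_rel F) r v)
    & #|F| = (#|S| - 1)%N].

Definition pmass (p : V -> R) (S : {set V}) : R := \sum_(v in S) p v.
Definition lmass (lam : {set V} -> R) (F : {set {set V}}) : R :=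
  \sum_(e in F) lam e.
Definition density (p : V -> R) (lam : {set V} -> R)
    (S : {set V}) (F : {set {set V}}) : R :=
  pmass p S / lmass lam F.

Definition nverts (r : V) : nat := #|[set v | v != r]|.
Definition gwfac (r : V) : R := 2 - (nverts r)%:R^-1.

(* Guarantee of the GW algorithm on lengths (ell e) and penalties p:
   ell(T) + (2-1/n) p(V\V[T]) <= (2-1/n) (ell(T') + p(V\V[T'])) for all T'. *)
Definition gw_output (E : {set {set V}}) (r : V) (ell : {set V} -> R)
    (p : V -> R) (S : {set V}) (F : {set {set V}}) : Prop :=
  is_rooted_subtree E r S F /\
  forall S' F', is_rooted_subtree E r S' F' ->
    lmass ell F + gwfac r * pmass p (~: S)
      <= gwfac r * (lmass ell F' + pmass p (~: S')).

Definition beta0 (E : {set {set V}}) (p : V -> R) (lam : {set V} -> R) : R :=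
  \big[Num.max/0]_(e in E) \big[Num.max/0]_(v in e) (p v / lam e).

(* Execution of the while loop of the parametric search.
   search_run E r p lam eps a b S F S' F' means: starting the loop in the state
   (alpha = a, beta = b, T^s = (S,F)), the loop can terminate with T^s = (S',F'),
   where each call to GW returns some tree satisfying the GW guarantee. *)
Inductive search_run (E : {set {set V}}) (r : V) (p : V -> R)
    (lam : {set V} -> R) (eps : R)
  : R -> R -> {set V} -> {set {set V}} -> {set V} -> {set {set V}} -> Prop :=
| search_stop a b S F :
    ~ (b > (1 + eps) * a) -> search_run E r p lam eps a b S F S F
| search_beta a b S F S1 F1 Sout Fout :
    b > (1 + eps) * a ->
    gw_output E r (fun e => (a + b) / 2 * lam e) p S1 F1 ->
    gwfac r * pmass p S1 <= (a + b) / 2 * lmass lam F1 ->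
    search_run E r p lam eps a ((a + b) / 2) S F Sout Fout ->
    search_run E r p lam eps a b S F Sout Fout
| search_alpha a b S F S1 F1 Sout Fout :
    b > (1 + eps) * a ->
    gw_output E r (fun e => (a + b) / 2 * lam e) p S1 F1 ->
    ~ (gwfac r * pmass p S1 <= (a + b) / 2 * lmass lam F1) ->
    search_run E r p lam eps (gwfac r * density p lam S1 F1) b S1 F1 Sout Fout ->
    search_run E r p lam eps a b S F Sout Fout.

Definition parametric_search_output (E : {set {set V}}) (r : V) (p : V -> R)
    (lam : {set V} -> R) (eps : R) (Ss : {set V}) (Fs : {set {set V}}) : Prop :=
  exists S0 F0, [/\ is_rooted_subtree E r S0 F0, 0 < lmass lam F0 &
    search_run E r p lam eps (gwfac r * density p lam S0 F0) (beta0 E p lam)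
      S0 F0 Ss Fs].

End Graph.

(* β is always an upper bound on the density of every rooted subtree.
   Initially this holds because each non-root vertex v of a tree can be charged
   to the edge joining it to its parent (towards the root), and p_v is at most
   β_0 times the length of that edge.  When a bisection step sets β ← ρ, the GW
   tree T satisfies (2 - 1/n) p(T) ≤ ρ λ(T); adding (2 - 1/n) p(V \ V[T]) to
   both sides and using the GW guarantee against any T' yields p(T') ≤ ρ λ(T').
   Since α = (2 - 1/n) ρ(T^s) throughout, termination gives
   ρ* ≤ β ≤ (1 + ε) α = (1 + ε)(2 - 1/n) ρ(T^s). *)

From mathcomp Require Import all_boot all_order all_algebra.
From mathcomp Require Import lra.
Import Order.TTheory GRing.Theory Num.Theory.
Set Implicit Arguments. Unset Strict Implicit.
Local Open Scope ring_scope.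

Section RootDistance.
Variables (V : finType) (r : V) (F : {set {set V}}).
Local Notation reach := (connect (edge_rel F) r).

Definition walk_to (k : nat) (v : V) : bool :=
  [exists t : k.-tuple V, path (edge_rel F) r t && (last r t == v)].

Lemma walk_to_exists v : exists k, walk_to k v || ~~ reach v.
Proof.
case rv: (reach v); last by exists 0%N; rewrite orbT.
move/connectP: rv => [s s_path s_last].
by exists (size s); apply/orP; left; apply/existsP; exists (in_tuple s);
  rewrite s_path s_last eqxx.
Qed.

(* Vertices not reachable from r get the junk distance 0. *)
Definition dist (v : V) : nat := ex_minn (walk_to_exists v).

Lemma walk_to_dist v : reach v -> walk_to (dist v) v.
Proof. by move=> rv; rewrite /dist; case: ex_minnP => k; rewrite rv orbF. Qed.

Lemma dist_le k v : walk_to k v -> (dist v <= k)%N.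
Proof. by move=> wv; rewrite /dist; case: ex_minnP => m _; apply; rewrite wv. Qed.

Lemma exists_parent v :
  reach v -> v != r -> exists2 u, edge_rel F u v & (dist u < dist v)%N.
Proof.
move=> rv vNr; have /existsP[[s /= /eqP size_s]] := walk_to_dist rv.
case/lastP: s size_s => [|s u] size_s /andP[].
  by move=> _ /= /eqP r_v; rewrite r_v eqxx in vNr.
rewrite rcons_path last_rcons => /andP[s_path su] /eqP u_v; subst u.
exists (last r s) => //; apply: leq_ltn_trans (dist_le _) _.
  by apply/existsP; exists (in_tuple s); rewrite s_path eqxx.
by rewrite -size_s size_rcons.
Qed.

Definition parent (v : V) : V :=
  odflt v [pick u | edge_rel F u v && (dist u < dist v)%N].

Definition parent_edge (v : V) : {set V} := [set parent v; v].

Lemma parent_spec v :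
  reach v -> v != r -> edge_rel F (parent v) v && (dist (parent v) < dist v)%N.
Proof.
move=> rv vNr; rewrite /parent; case: pickP => [u -> //|none].
by have [u uv lt_uv] := exists_parent rv vNr; have /= := none u; rewrite uv lt_uv.
Qed.

Lemma parent_edge_in v : reach v -> v != r -> parent_edge v \in F.
Proof. by move=> rv vNr; case/andP: (parent_spec rv vNr). Qed.

Lemma dist_parent_lt v : reach v -> v != r -> (dist (parent v) < dist v)%N.
Proof. by move=> rv vNr; case/andP: (parent_spec rv vNr). Qed.

Lemma parent_edge_inj :
  {in [pred v | reach v && (v != r)] &, injective parent_edge}.
Proof.
move=> v w /andP[rv vNr] /andP[rw wNr] eq_vw.
have lt_v := dist_parent_lt rv vNr; have lt_w := dist_parent_lt rw wNr.
have /set2P[v_pw | -> //] : v \in parent_edge w by rewrite -eq_vw set22.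
have /set2P[w_pv | -> //] : w \in parent_edge v by rewrite eq_vw set22.
rewrite -w_pv in lt_v; rewrite -v_pw in lt_w.
by have := ltn_trans lt_v lt_w; rewrite ltnn.
Qed.

End RootDistance.

Section InitialUpperBound.
Variables (R : realFieldType) (V : finType) (E : {set {set V}}) (r : V).
Variables (p : V -> R) (lam : {set V} -> R).
Hypothesis p_root : p r = 0.
Hypothesis lam_gt0 : forall e, e \in E -> 0 < lam e.

Lemma beta0_ge0 : 0 <= beta0 E p lam.
Proof. exact: bigmax_ge_id. Qed.

Lemma ratio_le_beta0 e v : e \in E -> v \in e -> p v / lam e <= beta0 E p lam.
Proof.
move=> eE ve; apply: le_trans (le_bigmax_cond _ _ eE).
exact: (le_bigmax_cond _ (fun w => p w / lam e) ve).
Qed.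

Lemma pmass_le_beta0_lmass S F :
  is_rooted_subtree E r S F -> pmass p S <= beta0 E p lam * lmass lam F.
Proof.
move=> [FE rS _ S_reach _].
have S_nonroot v : v \in S :\ r -> connect (edge_rel F) r v && (v != r).
  by rewrite in_setD1 => /andP[vNr vS]; rewrite S_reach.
have par_F v : v \in S :\ r -> parent_edge r F v \in F.
  by move=> /S_nonroot/andP[rv vNr]; apply: parent_edge_in.
have par_E v : v \in S :\ r -> parent_edge r F v \in E.
  by move=> /par_F; apply: (subsetP FE).
have par_inj : {in S :\ r &, injective (parent_edge r F)}.
  by move=> v w /S_nonroot vP /S_nonroot wP; apply: parent_edge_inj.
have imF : parent_edge r F @: (S :\ r) \subset F.
  by apply/subsetP => _ /imsetP[v vS ->]; apply: par_F.
rewrite /pmass (big_setD1 r rS) /= p_root add0r.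
apply: (@le_trans _ _ (\sum_(v in S :\ r) beta0 E p lam * lam (parent_edge r F v))).
  apply: ler_sum => v vS; rewrite -ler_pdivrMr ?lam_gt0 ?par_E //.
  by apply: ratio_le_beta0; rewrite ?par_E ?set22.
rewrite -mulr_sumr ler_wpM2l ?beta0_ge0 // -(big_imset lam par_inj) /lmass.
rewrite [leRHS](big_setID (parent_edge r F @: (S :\ r))) (setIidPr imF) lerDl.
by apply: sumr_ge0 => e /setDP[eF _]; apply/ltW/lam_gt0/(subsetP FE).
Qed.

End InitialUpperBound.

Definition density_bound (R : realFieldType) (V : finType) (E : {set {set V}})
    (r : V) (p : V -> R) (lam : {set V} -> R) (b : R) : Prop :=
  forall S F, is_rooted_subtree E r S F -> 0 < lmass lam F ->
    density p lam S F <= b.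

Section SearchInvariant.
Variables (R : realFieldType) (V : finType) (E : {set {set V}}) (r : V).
Variables (p : V -> R) (lam : {set V} -> R).

Local Notation g := (@gwfac R V r).

Lemma density_bound_of_pmass_le b :
  (forall S F, is_rooted_subtree E r S F -> pmass p S <= b * lmass lam F) ->
  density_bound E r p lam b.
Proof. by move=> ub S F SF lF; rewrite /density ler_pdivrMr ?ub. Qed.

Lemma gwfac_gt0 : 0 < g.
Proof.
have : (nverts r)%:R^-1 <= 1 :> R.
  by case: (nverts r) => [|n]; rewrite ?invr0 ?ler01 // invf_le1 ?ler1n.
by rewrite /gwfac; lra.
Qed.

Lemma lmassZ c F : lmass (fun e => c * lam e) F = c * lmass lam F.
Proof. by rewrite /lmass mulr_sumr. Qed.

Lemma pmassC S : pmass p S + pmass p (~: S) = \sum_v p v.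
Proof.
by rewrite /pmass [RHS](bigID (mem S)); congr (_ + _); apply: eq_bigl => v; rewrite inE.
Qed.

Lemma gw_certifies_density_bound rho S1 F1 :
  gw_output E r (fun e => rho * lam e) p S1 F1 ->
  g * pmass p S1 <= rho * lmass lam F1 ->
  forall S F, is_rooted_subtree E r S F -> pmass p S <= rho * lmass lam F.
Proof.
move=> [_ gw] cert S F SF; have := gw S F SF; rewrite !lmassZ => gwSF.
have total : g * pmass p S1 + g * pmass p (~: S1) = g * pmass p S + g * pmass p (~: S).
  by rewrite -!mulrDr !pmassC.
rewrite -(ler_pM2l gwfac_gt0); move: gwSF cert total; rewrite mulrDr.
lra.
Qed.

Lemma search_run_density_bound eps a b S F Ss Fs :
  search_run E r p lam eps a b S F Ss Fs ->
  a = g * density p lam S F -> density_bound E r p lam b ->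
  density_bound E r p lam ((1 + eps) * g * density p lam Ss Fs).
Proof.
elim=> {a b S F Ss Fs}.
- move=> a b S F stop a_def ub S' F' SF' lF'; apply: le_trans (ub _ _ SF' lF') _.
  by rewrite -mulrA leNgt -a_def; apply/negP.
- move=> a b S F S1 F1 Ss Fs _ gw cert _ IH a_def _; apply: IH => //.
  exact/density_bound_of_pmass_le/(gw_certifies_density_bound gw cert).
- by move=> a b S F S1 F1 Ss Fs _ _ _ _ IH _ ub; apply: IH.
Qed.

End SearchInvariant.

Theorem proposition1 (R : realFieldType) (V : finType) (E : {set {set V}})
    (r : V) (p : V -> R) (lam : {set V} -> R) (eps : R) :
  is_graph E ->
  connected_graph E ->
  (forall v, 0 <= p v <= 1) ->
  p r = 0 ->
  \sum_(v : V) p v = 1 ->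
  (forall e, e \in E -> 0 < lam e) ->
  0 < eps ->
  forall (Ss : {set V}) (Fs : {set {set V}}),
    parametric_search_output E r p lam eps Ss Fs ->
    forall (S : {set V}) (F : {set {set V}}),
      is_rooted_subtree E r S F -> 0 < lmass lam F ->
      density p lam S F <= (1 + eps) * @gwfac R V r * density p lam Ss Fs.
Proof.
move=> _ _ _ p_root _ lam_gt0 _ Ss Fs [S0 [F0 [_ _ run]]].
apply: (search_run_density_bound run erefl).
exact/density_bound_of_pmass_le/pmass_le_beta0_lmass.
Qed.
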